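(* Let $(L,L')$ be a pair of commensurable $K$-lattices, $L=(\Lambda,\phi)$, $L'=(\Lambda',\phi')$, whose classes modulo scaling coincide, i.e. $L'=\lambda L$ for some $\lambda\in\mathbb C^*$. Then either $L=L'$ or $\phi=\phi'=0$.
   Context: $K$ is an imaginary quadratic field with a fixed embedding $K\subset\mathbb C$, $\mathcal O$ its ring of integers. A $K$-lattice $(\Lambda,\phi)$: finitely generated $\mathcal O$-submodule $\Lambda\subset\mathbb C$ with $\Lambda\otimes_{\mathcal O}K\cong K$ and $\mathcal O$-module map $\phi:K/\mathcal O\to K\Lambda/\Lambda$; commensurability: $K\Lambda_1=K\Lambda_2$ and $\phi_1=\phi_2$ mod $\Lambda_1+\Lambda_2$; scaling $\lambda(\Lambda,\phi)=(\lambda\Lambda,\lambda\phi)$. *)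

From HB Require Import structures.
From mathcomp Require Import all_boot all_order all_algebra.
From mathcomp Require Import reals complex.
Set Implicit Arguments. Unset Strict Implicit. Unset Printing Implicit Defensive.
Import Order.TTheory GRing.Theory Num.Theory.
Local Open Scope ring_scope.

Section KLattices.
Variable R : realType.
Local Notation C := (R[i]).

(* An imaginary quadratic field K = Q(w) inside C, where w ^+ 2 = - d, d > 0. *)
Definition imag_quad_gen (d : nat) (w : C) : Prop :=
  (0 < d)%N /\ w ^+ 2 = - (d%:R).

Definition inK (w x : C) : Prop := exists a b : rat, x = ratr a + ratr b * w.

Definition inO (w x : C) : Prop :=
  inK w x /\ exists p : {poly int}, p \is monic /\ root (map_poly intr p) x.

Definition KSpan (w : C) (L : C -> Prop) (x : C) : Prop :=
  exists n (k l : 'I_n -> C),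
    (forall i, inK w (k i)) /\ (forall i, L (l i)) /\ x = \sum_(i < n) k i * l i.

(* Lambda is a finitely generated O-submodule of C with Lambda (x)_O K ~= K,
   i.e. K Lambda is a one-dimensional K-subspace of C. *)
Definition is_lattice (w : C) (L : C -> Prop) : Prop :=
  [/\ L 0,
      (forall x y, L x -> L y -> L (x - y)),
      (forall a x, inO w a -> L x -> L (a * x)),
      (exists n (g : 'I_n -> C), forall x,
          L x <-> exists c : 'I_n -> C, (forall i, inO w (c i)) /\
                                       x = \sum_(i < n) c i * g i) &
      (exists alpha : C, alpha != 0 /\
          forall x, KSpan w L x <-> exists k, inK w k /\ x = k * alpha)].

(* An O-module map phi : K/O -> K Lambda / Lambda, represented by a lift
   f : K -> K Lambda (values outside K are irrelevant). *)
Definition is_phi (w : C) (L : C -> Prop) (f : C -> C) : Prop :=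
  [/\ (forall x, inK w x -> KSpan w L (f x)),
      (forall x y, inK w x -> inK w y -> inO w (x - y) -> L (f x - f y)),
      (forall x y, inK w x -> inK w y -> L (f (x + y) - f x - f y)) &
      (forall a x, inO w a -> inK w x -> L (f (a * x) - a * f x))].

Definition is_Klattice (w : C) (L : C -> Prop) (f : C -> C) : Prop :=
  is_lattice w L /\ is_phi w L f.

(* equality of K-lattices: same Lambda and same phi (as maps into K Lambda/Lambda) *)
Definition KL_eq (w : C) (L1 : C -> Prop) (f1 : C -> C)
    (L2 : C -> Prop) (f2 : C -> C) : Prop :=
  (forall x, L1 x <-> L2 x) /\ (forall x, inK w x -> L1 (f1 x - f2 x)).

Definition commensurable (w : C) (L1 : C -> Prop) (f1 : C -> C)
    (L2 : C -> Prop) (f2 : C -> C) : Prop :=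
  (forall x, KSpan w L1 x <-> KSpan w L2 x) /\
  (forall x, inK w x -> exists y z, L1 y /\ L2 z /\ f1 x - f2 x = y + z).

Definition scaled_eq (w : C) (lam : C) (L1 : C -> Prop) (f1 : C -> C)
    (L2 : C -> Prop) (f2 : C -> C) : Prop :=
  (forall x, L2 x <-> exists y, L1 y /\ x = lam * y) /\
  (forall x, inK w x -> L2 (f2 x - lam * f1 x)).

Definition phi_zero (w : C) (L : C -> Prop) (f : C -> C) : Prop :=
  forall x, inK w x -> L (f x).

End KLattices.

From HB Require Import structures.
From mathcomp Require Import all_boot all_order all_algebra.
From mathcomp Require Import reals complex.
From mathcomp Require Import ring.
Import Order.TTheory GRing.Theory Num.Theory.
Local Open Scope ring_scope.
Set Implicit Arguments. Unset Strict Implicit.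

(* Comparing K-spans shows that the scaling factor lam lies in K.  If lam <> 1,
   then (1 - lam) phi = (phi - phi') + (phi' - lam phi) takes values in
   Lambda + lam Lambda, so after clearing denominators some nonzero integer M
   kills phi.  Since K/O is divisible, phi(x) = phi(M (x / M)) = M phi(x / M) = 0
   modulo Lambda, and then phi' = lam phi = 0 as well. *)

Section ImaginaryQuadratic.
Variable R : realType.
Local Notation C := (R[i]).
Variables (d : nat) (w : C).
Hypothesis hw : imag_quad_gen d w.

Definition inZw (x : C) : Prop := exists a b : int, x = a%:~R + b%:~R * w.

Lemma inZw_int (z : int) : inZw z%:~R.
Proof. by exists z, 0; rewrite mul0r addr0. Qed.

Lemma inZw_inO x : inZw x -> inO w x.
Proof.
case=> a [b ->]; split; first by exists a%:~R, b%:~R; rewrite !ratr_int.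
exists (('X - a%:P) ^+ 2 + (d%:R * b ^+ 2)%:P); split.
  rewrite monicE lead_coefDl; first by have := monic_exp 2 (monicXsubC a); rewrite monicE.
  by rewrite size_exp_XsubC; apply: (leq_ltn_trans (size_polyC_leq1 _)).
have [_ w2] := hw.
rewrite /root rmorphD /= expr2 rmorphM /= rmorphB /= map_polyX map_polyC /= map_polyC /=.
rewrite !hornerE !rmorphM /= rmorph_nat.
have -> : (a%:~R + b%:~R * w - a%:~R) * (a%:~R + b%:~R * w - a%:~R)
          = b%:~R * b%:~R * w ^+ 2 :> C by ring.
by rewrite w2; apply/eqP; ring.
Qed.

Lemma inK_int (z : int) : inK w z%:~R.
Proof. by exists z%:~R, 0; rewrite rmorph0 mul0r addr0 ratr_int. Qed.

Lemma inK1 : inK w 1.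
Proof. by have := inK_int 1; rewrite (rmorph1 intr). Qed.

Lemma inK_add x y : inK w x -> inK w y -> inK w (x + y).
Proof. by case=> a [b ->] [c [e ->]]; exists (a + c), (b + e); rewrite !rmorphD /=; ring. Qed.

Lemma inK_opp x : inK w x -> inK w (- x).
Proof. by case=> a [b ->]; exists (- a), (- b); rewrite !rmorphN /=; ring. Qed.

Lemma natr_d_sqrw : (d%:R : C) = - w ^+ 2.
Proof. by case: hw => _ ->; rewrite opprK. Qed.

Lemma inK_mul x y : inK w x -> inK w y -> inK w (x * y).
Proof.
case=> a [b ->] [c [e ->]]; exists (a * c - d%:R * (b * e)), (a * e + b * c).
by rewrite !(rmorphD, rmorphB, rmorphN, rmorphM) /= ratr_nat natr_d_sqrw; ring.
Qed.

(* The norm a^2 + d b^2 of a nonzero a + b w is a nonzero rational. *)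
Lemma inK_inv x : inK w x -> inK w x^-1.
Proof.
move=> hx; have [->|x0] := eqVneq x 0; first by rewrite invr0 -(rmorph0 intr); apply: inK_int.
case: hx x0 => a [b ->] x0; set n : rat := a ^+ 2 + d%:R * b ^+ 2.
have n0 : n != 0.
  apply/eqP=> /eqP; rewrite paddr_eq0 ?(sqr_ge0 a) ?(mulr_ge0 (ler0n _ d) (sqr_ge0 b)) //.
  case/andP; rewrite sqrf_eq0 mulf_eq0 sqrf_eq0 pnatr_eq0.
  case: hw => /lt0n_neq0 /negPf -> _ /= /eqP a0 /eqP b0.
  by move: x0; rewrite a0 b0 rmorph0 mul0r addr0 eqxx.
have norm_ab : (ratr a + ratr b * w) * (ratr a - ratr b * w) = ratr n :> C.
  by rewrite /n !(rmorphD, rmorphM, rmorphXn) /= ratr_nat natr_d_sqrw; ring.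
exists (a / n), (- b / n); apply: (mulfI x0).
rewrite mulfV // !(rmorphM, rmorphN) /= fmorphV.
transitivity ((ratr a + ratr b * w) * (ratr a - ratr b * w) / ratr n :> C); last by ring.
by rewrite norm_ab mulfV // fmorph_eq0.
Qed.

Lemma inK_div x y : inK w x -> inK w y -> inK w (x / y).
Proof. by move=> hx hy; apply: inK_mul => //; apply: inK_inv. Qed.

Lemma inK_int_denominator x : inK w x -> exists N : int, N != 0 /\ inZw (N%:~R * x).
Proof.
case=> a [b ->].
have denqK q : (denq q)%:~R * ratr q = (numq q)%:~R :> C.
  by rewrite /ratr mulrC divfK // intr_eq0 denq_neq0.
exists (denq a * denq b); split; first by rewrite mulf_neq0 ?denq_neq0.
exists (denq b * numq a), (denq a * numq b).
by rewrite !rmorphM /= -(denqK a) -(denqK b); ring.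
Qed.

Section Lattice.
Context {L : C -> Prop}.
Hypothesis latL : is_lattice w L.

Lemma lattice_opp x : L x -> L (- x).
Proof. by case: latL => L0 LB _ _ _ Lx; have := LB _ _ L0 Lx; rewrite sub0r. Qed.

Lemma lattice_add x y : L x -> L y -> L (x + y).
Proof. by case: latL => _ LB _ _ _ Lx Ly; have := LB _ _ Lx (lattice_opp Ly); rewrite opprK. Qed.

Lemma lattice_mulZw a x : inZw a -> L x -> L (a * x).
Proof. by case: latL => _ _ LM _ _ /inZw_inO; apply: LM. Qed.

Lemma lattice_clear_denominators lam a : inK w lam -> inK w a -> a != 0 ->
  exists M : int, M != 0 /\
    forall u y z, L y -> L z -> a * u = y + lam * z -> L (M%:~R * u).
Proof.
move=> lamK aK a0.
have [N [N0 ZNlam]] := inK_int_denominator lamK.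
have Na0 : N%:~R * a != 0 by rewrite mulf_neq0 ?intr_eq0.
have [M [M0 ZM]] := inK_int_denominator (inK_inv (inK_mul (inK_int N) aK)).
exists M; split=> // u y z Ly Lz Eau.
have -> : M%:~R * u = M%:~R * (N%:~R * a)^-1 * (N%:~R * y + N%:~R * lam * z).
  have -> : N%:~R * y + N%:~R * lam * z = N%:~R * a * u by rewrite -mulrA -mulrDr -Eau mulrA.
  by rewrite -mulrA mulKf.
by apply: lattice_mulZw => //; apply: lattice_add; apply: lattice_mulZw => //; apply: inZw_int.
Qed.

Variable f : C -> C.
Hypothesis phiL : is_phi w L f.

(* K/O is divisible: phi x = M phi (x / M) modulo Lambda. *)
Lemma phi_zero_of_int_multiple (M : int) : M != 0 ->
  (forall x, inK w x -> L (M%:~R * f x)) -> phi_zero w L f.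
Proof.
move=> M0 LMf x Kx; have M0' : (M%:~R : C) != 0 by rewrite intr_eq0.
have KxM : inK w (x / M%:~R) by apply: inK_div => //; apply: inK_int.
case: phiL => _ _ _ phiO.
have := lattice_add (phiO _ _ (inZw_inO (inZw_int M)) KxM) (LMf _ KxM).
by rewrite mulrC divfK // subrK.
Qed.

End Lattice.

Lemma scale_inK L1 L2 lam : is_lattice w L1 ->
  (forall x, KSpan w L1 x <-> KSpan w L2 x) ->
  (forall x, L2 x <-> exists y, L1 y /\ x = lam * y) -> inK w lam.
Proof.
case=> _ _ _ _ [alpha [alpha0 KL1]] KS sc.
have [n [k [l [Kk [Ll Ealpha]]]]] : KSpan w L1 alpha.
  by apply/KL1; exists 1; split; [apply: inK1 | rewrite mul1r].
have : KSpan w L2 (lam * alpha).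
  exists n, k, (fun i => lam * l i); split=> //; split; first by move=> i; apply/sc; exists (l i).
  by rewrite Ealpha mulr_sumr; apply: eq_bigr => i _; rewrite mulrCA.
by move/KS/KL1 => [k' [Kk' /(mulIf alpha0) ->]].
Qed.

Section ScaledPair.
Variables (L1 L2 : C -> Prop) (f1 f2 : C -> C) (lam : C).
Hypothesis sc : scaled_eq w lam L1 f1 L2 f2.

Lemma scaled_eq1_KL_eq : lam = 1 -> is_lattice w L1 -> KL_eq w L1 f1 L2 f2.
Proof.
move=> lam1 latL1; move: sc; rewrite lam1 => -[scL scf]; split=> [x | x Kx].
  rewrite scL; split=> [L1x | [y [L1y ->]]]; last by rewrite mul1r.
  by exists x; rewrite mul1r.
have [y [L1y]] := (scL _).1 (scf x Kx).
rewrite !mul1r => Ef; have -> : f1 x - f2 x = - y by rewrite -opprB Ef.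
exact: lattice_opp L1y.
Qed.

Lemma phi_zero_scaled : is_lattice w L2 -> phi_zero w L1 f1 -> phi_zero w L2 f2.
Proof.
move: sc => [scL scf] latL2 phi1_0 x Kx.
have L2lamf1 : L2 (lam * f1 x) by apply/scL; exists (f1 x); split=> //; apply: phi1_0.
by have := lattice_add latL2 (scf x Kx) L2lamf1; rewrite subrK.
Qed.

Lemma commensurable_scaled_phi : is_lattice w L1 -> commensurable w L1 f1 L2 f2 ->
  forall x, inK w x -> exists y z, L1 y /\ L1 z /\ (1 - lam) * f1 x = y + lam * z.
Proof.
move: sc => [scL scf] latL1 [_ comm] x Kx.
have [y [z [L1y [L2z Ef]]]] := comm x Kx.
have [z' [L1z' Ez]] := (scL z).1 L2z.
have [t' [L1t' Et']] := (scL _).1 (scf x Kx).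
exists y, (z' + t'); split=> //; split; first exact: lattice_add.
have -> : (1 - lam) * f1 x = (f1 x - f2 x) + (f2 x - lam * f1 x) by ring.
by rewrite Ef Ez Et'; ring.
Qed.

End ScaledPair.

End ImaginaryQuadratic.

Theorem mainTheorem14 (R : realType) (d : nat) (w : R[i])
    (L1 : R[i] -> Prop) (f1 : R[i] -> R[i])
    (L2 : R[i] -> Prop) (f2 : R[i] -> R[i]) :
  imag_quad_gen d w ->
  is_Klattice w L1 f1 -> is_Klattice w L2 f2 ->
  commensurable w L1 f1 L2 f2 ->
  (exists lam : R[i], lam != 0 /\ scaled_eq w lam L1 f1 L2 f2) ->
  KL_eq w L1 f1 L2 f2 \/ (phi_zero w L1 f1 /\ phi_zero w L2 f2).
Proof.
move=> hw [latL1 phi1] [latL2 _] comm [lam [_ sc]].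
have lamK : inK w lam by apply: (scale_inK latL1 comm.1 sc.1).
have [lam1 | lam_neq1] := eqVneq lam 1; first by left; apply: (scaled_eq1_KL_eq sc).
have lam_subK : inK w (1 - lam) by apply: inK_add (inK1 _) (inK_opp lamK).
have lam_sub0 : 1 - lam != 0 by rewrite subr_eq0 eq_sym.
have [M [M0 clearM]] := lattice_clear_denominators hw latL1 lamK lam_subK lam_sub0.
have phi1_0 : phi_zero w L1 f1.
  apply: (phi_zero_of_int_multiple hw latL1 phi1 M0) => x Kx.
  have [y [z [L1y [L1z Ef]]]] := commensurable_scaled_phi sc latL1 comm Kx.
  exact: clearM Ef.
by right; split=> //; apply: (phi_zero_scaled sc).
Qed.
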